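(* There exists no undirected graph $G=(V,E)$ for which there is a set $B=\{((u_i,v_i),x_i): 1\le i\le4\}\subseteq\mathcal{D}\times[0,1]$ that is shattered by $\mathcal{F}^+=\{R_w: w\in V\}$ and such that there are at least three distinct indices $j',j'',j'''\in\{1,2,3,4\}$ with $\sigma_{u_{j'}v_{j'}}=\sigma_{u_{j''}v_{j''}}=\sigma_{u_{j'''}v_{j'''}}=1$.
   Context: $\mathcal{D}=\{(u,v)\in V\times V: u\ne v\}$. $\sigma_{uv}$ is the number of shortest paths from $u$ to $v$, $\sigma_{uv}(w)$ the number of those to which $w$ is internal ($w\ne u,v$, path through $w$); $f_w(u,v)=\sigma_{uv}(w)/\sigma_{uv}$ ($0$ if $\sigma_{uv}=0$). For $w\in V$, $R_w=\{((u,v),x)\in\mathcal{D}\times[0,1]: x\le f_w(u,v)\}$. A set $B$ is shattered by $\mathcal{F}^+$ if $\{R\cap B: R\in\mathcal{F}^+\}$ equals the power set of $B$. *)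

From mathcomp Require Import all_boot all_order all_algebra.
From mathcomp Require Import classical_sets reals.
Set Implicit Arguments. Unset Strict Implicit. Unset Printing Implicit Defensive.
Import Order.TTheory GRing.Theory Num.Theory.
Local Open Scope ring_scope.
Local Open Scope classical_set_scope.

(* An undirected graph on a finite vertex type V is given by an edge relation
   e : rel V that is symmetric and irreflexive (checked in the theorem). *)

Section Graph.
Variables (V : finType) (e : rel V).

Definition walks (k : nat) (u v : V) : {set (k.+1).-tuple V} :=
  [set t : (k.+1).-tuple V | [&& thead t == u,
                               path e (thead t) (behead t) &
                               last (thead t) (behead t) == v]].

Definition reach_in (k : nat) (u v : V) : bool := (0 < #|walks k u v|)%N.

Definition is_dist (k : nat) (u v : V) : bool :=
  reach_in k u v && [forall j : 'I_k, ~~ reach_in j u v].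

(* sigma u v = number of shortest paths from u to v (0 if v unreachable).
   A shortest walk has at most #|V| vertices, hence length < #|V|. *)
Definition sigma (u v : V) : nat :=
  \sum_(k < #|V|) (if is_dist k u v then #|walks k u v| else 0%N).

Definition sigma_through (w u v : V) : nat :=
  \sum_(k < #|V|) (if is_dist k u v then
       #|[set t in walks k u v | [&& w != u, w != v & w \in (t : seq V)]]|
     else 0%N).

Definition fw (R : realType) (w u v : V) : R :=
  if sigma u v == 0%N then 0 else (sigma_through w u v)%:R / (sigma u v)%:R.

Definition Rw (R : realType) (w : V) : set ((V * V) * R) :=
  [set p | p.1.1 != p.1.2 /\ 0 <= p.2 <= 1 /\ p.2 <= fw R w p.1.1 p.1.2].

Definition Fplus (R : realType) : set (set ((V * V) * R)) := range (@Rw R).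

End Graph.

Definition shattered (T : Type) (F : set (set T)) (B : set T) : Prop :=
  [set R `&` B | R in F] = [set A | A `<=` B].

From mathcomp Require Import all_boot all_order all_algebra zify.
From mathcomp Require Import classical_sets reals.
Set Implicit Arguments. Unset Strict Implicit. Unset Printing Implicit Defensive.
Import Order.TTheory GRing.Theory Num.Theory.

(* Each of the three pairs has a unique shortest path P1, P2, P3. Shattering
   yields two distinct vertices w, w' internal to all three paths and, for each
   two of the paths, a vertex internal to exactly those two. The internal
   vertices that a unique shortest path shares with another one form an
   interval of it, because shortest subpaths are unique. On P1, the vertex a
   shared with P2 only and the vertex b shared with P3 only therefore lie on
   opposite sides of the segment [w, w']: exactly one of them sees w on a
   shortest route to w'. This is a statement about graph distances alone, so
   it holds for each two of a, b, c, which is impossible for three vertices. *)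

Lemma distn_opposite_sides i i' k l : i != i' ->
  ~ (minn i i' <= k <= maxn i i') -> ~ (minn i i' <= l <= maxn i i') ->
  ~ (minn k i <= l <= maxn k i) -> ~ (minn l i <= k <= maxn l i) ->
  `|k - i'| = `|k - i| + `|i - i'| <-> `|l - i'| <> `|l - i| + `|i - i'|.
Proof.
move=> ne_ii' k_out l_out l_out_ki k_out_li.
by case: (leqP k i) l_out_ki => ki l_out_ki; case: (leqP l i) k_out_li => li k_out_li;
  case: (leqP i i') k_out l_out => ii' k_out l_out; split; lia.
Qed.

Lemma exists_notin (T : finType) (s : seq T) : (size s < #|T|)%N -> exists y, y \notin s.
Proof.
move=> lt_sT; apply/existsP; rewrite -negb_forall; apply: contraL lt_sT => /forallP in_s.
have <- : #|s| = #|T| by apply: eq_card => y; rewrite in_s.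
by rewrite -leqNgt card_size.
Qed.

Section Walks.
Variables (V : eqType) (e : rel V).
Hypothesis e_sym : symmetric e.

Definition walk (x : V) p y := path e x p && (last x p == y).

Definition is_distance n x y :=
  (exists2 p, walk x p y & size p = n) /\ (forall p, walk x p y -> n <= size p).

Definition vertex (x : V) p i := last x (take i p).

Definition unique_geodesic x p y :=
  [/\ walk x p y, forall q, walk x q y -> size p <= size q
    & forall q, walk x q y -> size q = size p -> q = p].

Definition internal (x : V) p y z := [&& z != x, z != y & z \in x :: p].

Definition lies_between w z z' := exists n m,
  [/\ is_distance n z w, is_distance m w z' & is_distance (n + m) z z'].

Lemma is_distance_unique n m x y : is_distance n x y -> is_distance m x y -> n = m.
Proof.
move=> [[p Wp <-] min_n] [[q Wq <-] min_m]; apply/eqP.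
by rewrite eqn_leq min_n // min_m.
Qed.

Lemma is_distance0 x : is_distance 0 x x.
Proof. by split=> //; exists [::]; rewrite /walk /= ?eqxx. Qed.

Lemma walk_rev x p y : walk x p y -> walk y (rev (belast x p)) x.
Proof.
move=> /andP [Wp /eqP <-]; apply/andP; split.
  by rewrite rev_path (@eq_path _ _ e) // => a b; exact: e_sym.
have := congr1 (last x) (rev_rcons (belast x p) (last x p)).
by rewrite -lastI rev_cons last_rcons /= => <-.
Qed.

Lemma is_distance_sym n x y : is_distance n x y -> is_distance n y x.
Proof.
move=> [[p Wp <-] min_n]; split.
  by exists (rev (belast x p)); rewrite ?size_rev ?size_belast //; exact: walk_rev.
by move=> q /walk_rev/min_n; rewrite size_rev size_belast.
Qed.

Lemma vertex0 x p : vertex x p 0 = x.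
Proof. by rewrite /vertex take0. Qed.

Lemma vertex_size x p y : walk x p y -> vertex x p (size p) = y.
Proof. by rewrite /vertex take_size => /andP [_ /eqP]. Qed.

Lemma vertex_mem x p i : vertex x p i \in x :: p.
Proof.
have := mem_last x (take i p); rewrite !inE => /orP [-> // | z_take].
by rewrite (mem_take z_take) orbT.
Qed.

Lemma vertexP x p z : z \in x :: p -> exists2 i, i <= size p & z = vertex x p i.
Proof.
elim: p x => [|a p IHp] x; rewrite inE; first by move/eqP->; exists 0.
case/orP=> [/eqP-> | /IHp [i le_ip ->]]; first by exists 0.
by exists i.+1.
Qed.

Lemma last_vertex_segment x p i l :
  last (vertex x p i) (take l (drop i p)) = vertex x p (i + l).
Proof. by rewrite /vertex -last_cat -takeD. Qed.

Lemma walk_segment x p i j : path e x p -> i <= j ->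
  walk (vertex x p i) (take (j - i) (drop i p)) (vertex x p j).
Proof.
move=> Wp le_ij; rewrite /walk last_vertex_segment subnKC // eqxx andbT.
move: Wp; rewrite -{1}(cat_take_drop i p) cat_path => /andP [_].
by rewrite -{1}(cat_take_drop (j - i) (drop i p)) cat_path => /andP [].
Qed.

Lemma mem_segment x p i j z : i <= j <= size p ->
  z \in vertex x p i :: take (j - i) (drop i p) ->
  exists2 l, i <= l <= j & z = vertex x p l.
Proof.
move=> /andP [le_ij le_jp] /vertexP [l le_l ->].
have le_lji : l <= j - i by move: le_l; rewrite size_take; case: ifP; lia.
rewrite /vertex (take_takel _ le_lji) -/(vertex x p i) last_vertex_segment.
by exists (i + l) => //; lia.
Qed.

Lemma walk_splice x p y i j q : walk x p y ->
  walk (vertex x p i) q (vertex x p j) -> walk x (take i p ++ q ++ drop j p) y.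
Proof.
move=> /andP [Wp /eqP Lp] /andP [Wq /eqP Lq].
have := Wp; rewrite -{1}(cat_take_drop i p) cat_path => /andP [Wi _].
have := Wp; rewrite -{1}(cat_take_drop j p) cat_path => /andP [_ Wj].
have Lj : last (vertex x p j) (drop j p) = y by rewrite /vertex -last_cat cat_take_drop.
by rewrite /walk !cat_path !last_cat Wi Wq Lq Wj Lj eqxx.
Qed.

Lemma vertex_mem_segment x p i j m : i <= m <= j ->
  vertex x p m \in vertex x p i :: take (j - i) (drop i p).
Proof.
move=> /andP [le_im le_mj]; have -> : m = i + (m - i) by lia.
rewrite -last_vertex_segment -(@take_takel _ (m - i) (j - i)); last lia.
exact: vertex_mem.
Qed.

Lemma internal_vertex x p y z : walk x p y -> internal x p y z ->
  exists2 l, 0 < l < size p & z = vertex x p l.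
Proof.
move=> W /and3P [zx zy /vertexP [l le_lp Ez]]; exists l => //.
rewrite lt0n ltn_neqAle le_lp andbT; apply/andP; split.
  by apply: contra_neq zx => l0; rewrite Ez l0 vertex0.
by apply: contra_neq zy => El; rewrite Ez El (vertex_size W).
Qed.

Lemma subwalk x p i j : path e x p -> i <= size p -> j <= size p ->
  exists r, [/\ walk (vertex x p i) r (vertex x p j), size r = `|i - j|
    & forall z, z \in vertex x p i :: r ->
        exists2 l, minn i j <= l <= maxn i j & z = vertex x p l].
Proof.
move=> Wp le_ip le_jp; case: (leqP i j) => [le_ij | lt_ji].
  exists (take (j - i) (drop i p)); split; first exact: walk_segment.
    by rewrite size_takel ?size_drop; lia.
  by move=> z /mem_segment [|l bounds ->]; [lia | exists l => //; lia].
set s := take (i - j) (drop j p).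
have Ws : walk (vertex x p j) s (vertex x p i) by apply: walk_segment; lia.
exists (rev (belast (vertex x p j) s)); split; first exact: walk_rev.
  by rewrite size_rev size_belast size_takel ?size_drop; lia.
have Ls : last (vertex x p j) s = vertex x p i by case/andP: Ws => _ /eqP.
move=> z; rewrite -{1}Ls -rev_rcons -lastI mem_rev.
by move=> /mem_segment [|l bounds ->]; [lia | exists l => //; lia].
Qed.

Section UniqueGeodesic.
Variables (x y : V) (p : seq V).
Hypothesis geo : unique_geodesic x p y.

Lemma is_distance_geodesic_segment i j : i <= j <= size p ->
  is_distance (j - i) (vertex x p i) (vertex x p j).
Proof.
case: geo => W min_p _ /andP [le_ij le_jp]; split.
  exists (take (j - i) (drop i p)); first by case/andP: W => Wp _; exact: walk_segment.
  by rewrite size_takel // size_drop; lia.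
by move=> q /(walk_splice W)/min_p; rewrite !size_cat size_takel ?size_drop; lia.
Qed.

Lemma is_distance_geodesic i j : i <= size p -> j <= size p ->
  is_distance `|i - j| (vertex x p i) (vertex x p j).
Proof.
move=> le_ip le_jp; case: (leqP i j) => [le_ij | /ltnW le_ji].
  by rewrite distnEr //; apply: is_distance_geodesic_segment; rewrite le_ij.
rewrite distnEl //; apply/is_distance_sym/is_distance_geodesic_segment.
by rewrite le_ji.
Qed.

Lemma geodesic_segment_unique i j q : i <= j <= size p ->
  walk (vertex x p i) q (vertex x p j) -> size q = j - i ->
  q = take (j - i) (drop i p).
Proof.
case: geo => W _ uniq_p /andP [le_ij le_jp] Wq size_q.
have size_i : size (take i p) = i by rewrite size_takel //; lia.
have := uniq_p _ (walk_splice W Wq).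
rewrite !size_cat size_q size_i size_drop => /(_ ltac:(lia)) {1}<-.
by rewrite drop_size_cat // take_size_cat.
Qed.

Lemma vertex_internal l : 0 < l < size p -> internal x p y (vertex x p l).
Proof.
case/andP=> l_gt0 lt_lp; have [W _ _] := geo.
rewrite /internal vertex_mem andbT; apply/andP; split; apply/eqP => El.
  have := is_distance_geodesic_segment (i := 0) (j := l).
  rewrite subn0 vertex0 El => /(_ ltac:(lia))/is_distance_unique/(_ (is_distance0 x)).
  lia.
have := is_distance_geodesic_segment (i := l) (j := size p).
rewrite (vertex_size W) El => /(_ ltac:(lia))/is_distance_unique/(_ (is_distance0 y)).
lia.
Qed.

Lemma lies_between_vertex a b c : a <= size p -> b <= size p -> c <= size p ->
  lies_between (vertex x p b) (vertex x p a) (vertex x p c) <->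
  `|a - c| = `|a - b| + `|b - c|.
Proof.
move=> le_a le_b le_c; have D := is_distance_geodesic.
split=> [[n [m [Dab Dbc Dac]]] | E]; last first.
  by exists `|a - b|, `|b - c|; rewrite -E; split; exact: D.
rewrite (is_distance_unique (D _ _ le_a le_b) Dab).
rewrite (is_distance_unique (D _ _ le_b le_c) Dbc).
exact: is_distance_unique (D _ _ le_a le_c) Dac.
Qed.

End UniqueGeodesic.

(* The piece of p between i and j and the piece of p' joining the same two
   vertices are shortest walks of the same length, so uniqueness of shortest
   walks along p makes them equal. *)
Lemma internal_convex x p y x' p' y' i j m :
  unique_geodesic x p y -> unique_geodesic x' p' y' ->
  i <= m <= j -> j <= size p ->
  internal x' p' y' (vertex x p i) -> internal x' p' y' (vertex x p j) ->
  internal x' p' y' (vertex x p m).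
Proof.
move=> geo geo' bounds le_jp Ii Ij; have [W _ _] := geo; have [W' _ _] := geo'.
have [i' /andP [i'_gt0 lt_i'] Ei] := internal_vertex W' Ii.
have [j' /andP [j'_gt0 lt_j'] Ej] := internal_vertex W' Ij.
have le_ij : i <= j <= size p by rewrite le_jp andbT; lia.
have dist_ij : `|i' - j'| = j - i.
  apply: is_distance_unique (is_distance_geodesic geo' (ltnW lt_i') (ltnW lt_j')) _.
  by rewrite -Ei -Ej; exact: (is_distance_geodesic_segment geo le_ij).
have [r [Wr size_r r_on_p']] := subwalk (andP W').1 (ltnW lt_i') (ltnW lt_j').
rewrite -Ei -Ej dist_ij in Wr size_r.
have := vertex_mem_segment x p bounds.
rewrite -(geodesic_segment_unique geo le_ij Wr size_r) Ei => /r_on_p' [l bounds_l ->].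
by apply: (vertex_internal geo'); lia.
Qed.

(* By convexity, along p neither a nor b lies between w and w', nor between
   the other one and w: so a and b lie on opposite sides of [w, w']. *)
Lemma lies_between_flip x p y x1 p1 y1 x2 p2 y2 w w' a b :
  unique_geodesic x p y -> unique_geodesic x1 p1 y1 -> unique_geodesic x2 p2 y2 ->
  w != w' ->
  [&& internal x p y w, internal x p y w', internal x p y a & internal x p y b] ->
  [&& internal x1 p1 y1 w, internal x1 p1 y1 w', internal x1 p1 y1 a
    & ~~ internal x1 p1 y1 b] ->
  [&& internal x2 p2 y2 w, internal x2 p2 y2 w', internal x2 p2 y2 b
    & ~~ internal x2 p2 y2 a] ->
  (lies_between w a w' <-> ~ lies_between w b w').
Proof.
move=> geo geo1 geo2 ww' /and4P [Iw Iw' Ia Ib].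
move=> /and4P [Iw1 Iw'1 Ia1 Nb1] /and4P [Iw2 Iw'2 Ib2 Na2].
have [W _ _] := geo.
have [i /andP [_ lt_i] Ew] := internal_vertex W Iw.
have [i' /andP [_ lt_i'] Ew'] := internal_vertex W Iw'.
have [k /andP [_ lt_k] Ea] := internal_vertex W Ia.
have [l /andP [_ lt_l] Eb] := internal_vertex W Ib.
subst w w' a b; have ne_ii' : i != i' by apply: contraNneq ww' => ->.
have apart x3 p3 y3 n n' m : unique_geodesic x3 p3 y3 -> n < size p -> n' < size p ->
    internal x3 p3 y3 (vertex x p n) -> internal x3 p3 y3 (vertex x p n') ->
    ~~ internal x3 p3 y3 (vertex x p m) -> ~ (minn n n' <= m <= maxn n n').
  move=> geo3 lt_n lt_n' In In' /negP Nm bounds; apply: Nm.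
  case: (leqP n n') bounds => _ bounds;
    by apply: (internal_convex geo geo3 bounds) => //; exact: ltnW.
rewrite !(lies_between_vertex geo) ?(ltnW lt_i, ltnW lt_i', ltnW lt_k, ltnW lt_l) //.
exact: distn_opposite_sides ne_ii'
  (apart _ _ _ _ _ _ geo2 lt_i lt_i' Iw2 Iw'2 Na2)
  (apart _ _ _ _ _ _ geo1 lt_i lt_i' Iw1 Iw'1 Nb1)
  (apart _ _ _ _ _ _ geo1 lt_k lt_i Ia1 Iw1 Nb1)
  (apart _ _ _ _ _ _ geo2 lt_l lt_i Ib2 Iw2 Na2).
Qed.

Lemma three_unique_geodesics_contra x1 p1 y1 x2 p2 y2 x3 p3 y3 w w' a b c :
  unique_geodesic x1 p1 y1 -> unique_geodesic x2 p2 y2 -> unique_geodesic x3 p3 y3 ->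
  w != w' ->
  [&& internal x1 p1 y1 w, internal x2 p2 y2 w & internal x3 p3 y3 w] ->
  [&& internal x1 p1 y1 w', internal x2 p2 y2 w' & internal x3 p3 y3 w'] ->
  [&& internal x1 p1 y1 a, internal x2 p2 y2 a & ~~ internal x3 p3 y3 a] ->
  [&& internal x1 p1 y1 b, ~~ internal x2 p2 y2 b & internal x3 p3 y3 b] ->
  [&& ~~ internal x1 p1 y1 c, internal x2 p2 y2 c & internal x3 p3 y3 c] -> False.
Proof.
move=> geo1 geo2 geo3 ww' /and3P [w1 w2 w3] /and3P [w'1 w'2 w'3].
move=> /and3P [a1 a2 na3] /and3P [b1 nb2 b3] /and3P [nc1 c2 c3].
have flip1 := lies_between_flip (a := a) (b := b) geo1 geo2 geo3 ww'.
have flip2 := lies_between_flip (a := a) (b := c) geo2 geo1 geo3 ww'.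
have flip3 := lies_between_flip (a := b) (b := c) geo3 geo1 geo2 ww'.
rewrite w1 w'1 a1 b1 w2 w'2 a2 nb2 w3 w'3 b3 na3 /= in flip1.
rewrite w2 w'2 a2 c2 w1 w'1 a1 nc1 w3 w'3 c3 na3 /= in flip2.
rewrite w3 w'3 b3 c3 w1 w'1 b1 nc1 w2 w'2 c2 nb2 /= in flip3.
by move: (flip1 isT isT isT) (flip2 isT isT isT) (flip3 isT isT isT); tauto.
Qed.

End Walks.

Section ShortestPathCounts.
Variables (V : finType) (e : rel V).

Lemma in_walks k u v (t : k.+1.-tuple V) :
  (t \in walks e k u v) = (thead t == u) && walk e u (behead t) v.
Proof. by rewrite inE /walk; case: (thead t =P u) => [->|]. Qed.

Lemma walk_tuple k u v q : size q = k -> walk e u q v ->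
  exists2 t : k.+1.-tuple V, t \in walks e k u v & t = u :: q :> seq V.
Proof.
move=> size_q W; have size_uq : size (u :: q) == k.+1 by rewrite /= size_q.
by exists (Tuple size_uq) => //; rewrite in_walks /thead (tnth_nth u) /= eqxx.
Qed.

Lemma reach_inP k u v :
  reflect (exists2 q, walk e u q v & size q = k) (reach_in e k u v).
Proof.
apply: (iffP card_gt0P) => [[t] | [q W size_q]].
  by rewrite in_walks => /andP [_ W]; exists (behead t); rewrite ?size_behead ?size_tuple.
by have [t t_in _] := walk_tuple size_q W; exists t.
Qed.

Lemma is_dist_unique k k' u v : is_dist e k u v -> is_dist e k' u v -> k = k'.
Proof.
move=> /andP [reach_k /forallP shortest_k] /andP [reach_k' /forallP shortest_k'].
case: (ltngtP k k') => // [lt_kk' | lt_k'k].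
  by have := shortest_k' (Ordinal lt_kk'); rewrite reach_k.
by have := shortest_k (Ordinal lt_k'k); rewrite reach_k'.
Qed.

Lemma sum_is_dist (k : 'I_#|V|) u v (F : 'I_#|V| -> nat) : is_dist e k u v ->
  \sum_(k' < #|V|) (if is_dist e k' u v then F k' else 0) = F k.
Proof.
move=> dist_k; rewrite (bigD1 k) //= dist_k big1 ?addn0 // => k' ne_k'k.
by case: ifP => // /is_dist_unique/(_ dist_k)/ord_inj/eqP; rewrite (negbTE ne_k'k).
Qed.

Lemma is_dist_unique_geodesic k u v t0 : is_dist e k u v ->
  walks e k u v = [set t0] -> unique_geodesic e u (behead t0) v.
Proof.
move=> /andP [_ /forallP shortest] walks_k.
have : t0 \in walks e k u v by rewrite walks_k set11.
rewrite in_walks => /andP [_ W0].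
have size_p : size (behead t0) = k by rewrite size_behead size_tuple.
split=> // q Wq; rewrite size_p.
  rewrite leqNgt; apply/negP => lt_qk; move: (shortest (Ordinal lt_qk)).
  by move/negP; apply; apply/reach_inP; exists q.
move=> size_q; have [t] := walk_tuple size_q Wq; rewrite walks_k inE => /eqP -> E.
by rewrite -[q]/(behead (u :: q)) -E.
Qed.

Lemma sigma1_unique_geodesic u v : sigma e u v = 1 ->
  exists2 p, unique_geodesic e u p v & forall w, sigma_through e w u v = internal u p v w.
Proof.
case: (pickP (fun k : 'I_#|V| => is_dist e k u v)) => [k dist_k | no_dist]; last first.
  by rewrite /sigma big1 // => k _; rewrite no_dist.
rewrite /sigma (sum_is_dist _ dist_k) => /eqP/cards1P [t0 walks_k].
have : t0 \in walks e k u v by rewrite walks_k set11.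
rewrite in_walks => /andP [/eqP head_t0 _].
have t0E : t0 = u :: behead t0 :> seq V by rewrite {1}(tuple_eta t0) /= head_t0.
exists (behead t0); first exact: is_dist_unique_geodesic dist_k walks_k.
move=> w; rewrite /sigma_through (sum_is_dist _ dist_k) walks_k.
case: (boolP (internal u (behead t0) v w)) => Iw.
  rewrite (_ : [set t in _ | _] = [set t0]) ?cards1 //.
  by apply/setP => t; rewrite !inE; case: (t =P t0) => // ->; rewrite t0E.
rewrite (_ : [set t in _ | _] = finset.set0) ?cards0 //.
by apply/setP => t; rewrite !inE; case: (t =P t0) => // ->; rewrite t0E; exact: negbTE Iw.
Qed.

End ShortestPathCounts.

Local Open Scope classical_set_scope.

Lemma shattered_indexed (T I : Type) (F : set (set T)) (f : I -> T) :
  injective f -> shattered F (f @` setT) ->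
  forall S : set I, exists2 A, F A & forall i, A (f i) <-> S i.
Proof.
move=> inj_f shat S.
have : [set A | A `<=` f @` setT] (f @` S) by move=> _ [i _ <-]; exists i.
rewrite -shat => -[A FA AfS]; exists A => // i; split => [Afi | Si].
  have : (A `&` f @` setT) (f i) by split => //; exists i.
  by rewrite AfS => -[j Sj /inj_f <-].
have : (f @` S) (f i) by exists i.
by rewrite -AfS => -[].
Qed.

Local Open Scope ring_scope.

Section ShortestPathFraction.
Variables (R : realType) (V : finType) (e : rel V).

Lemma shattered_Fplus (I : Type) (pt : I -> (V * V) * R) :
  injective pt -> shattered (Fplus (R := R) e) (pt @` setT) ->
  forall S : pred I, exists w, forall i, Rw e w (pt i) <-> S i.
Proof.
move=> inj_pt shat S.
by have [_ [w _ <-] Rw_S] := shattered_indexed inj_pt shat [set i | S i]; exists w.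
Qed.

Lemma notin_Rw_gt0 (x : R) w u v : u != v -> 0 <= x <= 1 -> ~ Rw e w ((u, v), x) -> 0 < x.
Proof.
move=> uv x01 notR; have fw_ge0 : 0 <= fw e R w u v.
  by rewrite /fw; case: ifP => // _; rewrite divr_ge0.
by rewrite (le_lt_trans fw_ge0) // ltNge; apply/negP => le_x; exact: notR.
Qed.

Lemma Rw_sigma1 (x : R) u v : sigma e u v = 1%N -> u != v -> 0 < x <= 1 ->
  exists2 p, unique_geodesic e u p v & forall w, Rw e w ((u, v), x) <-> internal u p v w.
Proof.
move=> sigma1 uv /andP [x_gt0 x_le1].
have [p geo through] := sigma1_unique_geodesic sigma1; exists p => // w.
rewrite /Rw /fw /= sigma1 through divr1 (ltW x_gt0) x_le1.
by case: internal; split=> // [[_ [_]]]; rewrite leNgt x_gt0.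
Qed.

End ShortestPathFraction.

Theorem lemma3 (R : realType) (V : finType) (e : rel V)
    (e_sym : symmetric e) (e_irr : irreflexive e) :
  ~ exists (u v : 'I_4 -> V) (x : 'I_4 -> R),
      injective (fun i => ((u i, v i), x i)) /\
      (forall i, u i != v i /\ 0 <= x i <= 1) /\
      shattered (Fplus (R := R) e) [set ((u i, v i), x i) | i in [set: 'I_4]] /\
      exists j1 j2 j3 : 'I_4,
        [/\ j1 != j2, j1 != j3 & j2 != j3] /\
        [/\ sigma e (u j1) (v j1) = 1%N,
             sigma e (u j2) (v j2) = 1%N &
             sigma e (u j3) (v j3) = 1%N].
Proof.
move=> [u [v [x [inj_pt [uvx [shat [j1 [j2 [j3 [[n12 n13 n23] [s1 s2 s3]]]]]]]]]]].
have realize := shattered_Fplus inj_pt shat.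
have x_range j : 0 < x j <= 1.
  have [w notR] := realize pred0; have [uv x01] := uvx j.
  by rewrite (andP x01).2 andbT; apply: notin_Rw_gt0 uv x01 _ => /notR.
have [p1 geo1 I1] := Rw_sigma1 s1 (uvx j1).1 (x_range j1).
have [p2 geo2 I2] := Rw_sigma1 s2 (uvx j2).1 (x_range j2).
have [p3 geo3 I3] := Rw_sigma1 s3 (uvx j3).1 (x_range j3).
have [j4] : exists j4, j4 \notin [:: j1; j2; j3] by apply: exists_notin; rewrite card_ord.
rewrite !inE !negb_or ![j4 == _]eq_sym => /and3P [n14 n24 n34].
have pattern (S : pred 'I_4) : exists w, [/\ Rw e w ((u j4, v j4), x j4) <-> S j4,
    internal (u j1) p1 (v j1) w = S j1, internal (u j2) p2 (v j2) w = S j2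
    & internal (u j3) p3 (v j3) w = S j3].
  have [w Rw_S] := realize S; exists w; split; first exact: Rw_S.
  - by apply/idP/idP => [/I1/Rw_S | /Rw_S/I1].
  - by apply/idP/idP => [/I2/Rw_S | /Rw_S/I2].
  - by apply/idP/idP => [/I3/Rw_S | /Rw_S/I3].
have [wA [RA A1 A2 A3]] := pattern predT.
have [wB [RB B1 B2 B3]] := pattern (predC1 j4).
have [a [_ a1 a2 a3]] := pattern (pred2 j1 j2).
have [b [_ b1 b2 b3]] := pattern (pred2 j1 j3).
have [c [_ c1 c2 c3]] := pattern (pred2 j2 j3).
apply: (three_unique_geodesics_contra e_sym geo1 geo2 geo3
  (w := wA) (w' := wB) (a := a) (b := b) (c := c)).
- by apply/eqP => eAB; move: (RA.2 isT); rewrite eAB => /RB; rewrite /= eqxx.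
- by rewrite A1 A2 A3.
- by rewrite B1 B2 B3 /= n14 n24 n34.
- by rewrite a1 a2 a3 /= !eqxx orbT ![j3 == _]eq_sym (negbTE n13) (negbTE n23).
- by rewrite b1 b2 b3 /= !eqxx orbT (eq_sym j2 j1) (negbTE n12) (negbTE n23).
- by rewrite c1 c2 c3 /= !eqxx orbT (negbTE n12) (negbTE n13).
Qed.
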